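(* Let $a_1,a_2,a_3,a_4,a_5$ be rational numbers with $1\geqslant a_1\geqslant a_2\geqslant a_3\geqslant a_4\geqslant a_5\geqslant 0$, and let $\delta\geqslant 0$ be rational. Let $N$ be the largest number among $a_2,\ a_2+a_3,\ a_2+a_4,\ a_2+a_5,\ a_3+a_4,\ a_3+a_5,\ a_4+a_5,\ a_2+a_3+a_4,\ a_2+a_3+a_5,\ a_2+a_4+a_5,\ a_3+a_4+a_5,\ a_2+a_3+a_4+a_5$ that does not exceed $1$. Define $$\alpha=\begin{cases}\frac{2}{3+2a_1+2\delta+a_2+a_3+a_4} & \text{if } a_2+a_3\leqslant 1+a_4,\\ \frac{2}{3+2a_1+2\delta+a_2+a_4} & \text{if } a_2+a_4\leqslant 1 \text{ and } a_2+a_3>1+a_4,\\ \frac{2}{3+2a_1+2\delta+a_3+a_4} & \text{if } a_3+a_4\leqslant 1,\ a_2+a_4>1 \text{ and } a_2+a_3>1+a_4,\\ \frac{2}{3+2a_1+2\delta+a_2} & \text{if } a_3+a_4>1,\ a_2+a_4>1 \text{ and } a_2+a_3>1+a_4.\end{cases}$$ Then $$\frac{2}{3+2a_1+2\delta+N}\leqslant\frac{2}{3}\cdot\frac{4+2\delta+a_1+a_2+a_3+a_4+a_5}{4+4\delta+2(a_1+a_2+a_3+a_4+a_5)-a_1^2-a_2^2-a_3^2-a_4^2-a_5^2}$$ and $$\alpha\leqslant\frac{8+4\delta+2a_1+2a_2+2a_3+2a_4}{12+12\delta+6a_1+6a_2+6a_3+6a_4-3a_1^2-3a_2^2-3a_3^2-3a_4^2}.$$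 Moreover, both inequalities are strict unless $a_1=\delta=0$.
   Context: Here $\alpha$ is merely the number defined in the statement (not an $\alpha$-invariant). *)

From mathcomp Require Import all_boot all_order all_algebra.
Set Implicit Arguments. Unset Strict Implicit. Unset Printing Implicit Defensive.
Import Order.TTheory GRing.Theory Num.Theory.
Local Open Scope ring_scope.

Definition candidates (a2 a3 a4 a5 : rat) : seq rat :=
  [:: a2; a2 + a3; a2 + a4; a2 + a5; a3 + a4; a3 + a5; a4 + a5;
      a2 + a3 + a4; a2 + a3 + a5; a2 + a4 + a5; a3 + a4 + a5;
      a2 + a3 + a4 + a5].

Definition is_largest_le1 (s : seq rat) (N : rat) : Prop :=
  N \in s /\ N <= 1 /\ (forall x, x \in s -> x <= 1 -> x <= N).

Definition alpha (a1 a2 a3 a4 delta : rat) : rat :=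
  if a2 + a3 <= 1 + a4 then 2 / (3 + 2 * a1 + 2 * delta + a2 + a3 + a4)
  else if a2 + a4 <= 1 then 2 / (3 + 2 * a1 + 2 * delta + a2 + a4)
  else if a3 + a4 <= 1 then 2 / (3 + 2 * a1 + 2 * delta + a3 + a4)
  else 2 / (3 + 2 * a1 + 2 * delta + a2).

Definition lhs1 (a1 delta N : rat) : rat := 2 / (3 + 2 * a1 + 2 * delta + N).

Definition rhs1 (a1 a2 a3 a4 a5 delta : rat) : rat :=
  (2 / 3) * ((4 + 2 * delta + a1 + a2 + a3 + a4 + a5) /
   (4 + 4 * delta + 2 * (a1 + a2 + a3 + a4 + a5)
      - a1 ^+ 2 - a2 ^+ 2 - a3 ^+ 2 - a4 ^+ 2 - a5 ^+ 2)).

Definition rhs2 (a1 a2 a3 a4 delta : rat) : rat :=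
  (8 + 4 * delta + 2 * a1 + 2 * a2 + 2 * a3 + 2 * a4) /
  (12 + 12 * delta + 6 * a1 + 6 * a2 + 6 * a3 + 6 * a4
     - 3 * a1 ^+ 2 - 3 * a2 ^+ 2 - 3 * a3 ^+ 2 - 3 * a4 ^+ 2).

From mathcomp Require Import all_boot all_order all_algebra.
From mathcomp Require Import ring lra.
Set Implicit Arguments.
Unset Strict Implicit.
Unset Printing Implicit Defensive.
Import Order.TTheory GRing.Theory Num.Theory.
Local Open Scope ring_scope.

(* Both inequalities have the shape 2 / A <= 2/3 * (B / D) with
   A = 3 + 2 a1 + 2 delta + x, B = 4 + 2 delta + S and D = 4 + 4 delta + 2 S - Q,
   where S and Q are the sum and the sum of squares of the a_i (for alpha only
   a1, ..., a4 occur, i.e. a5 = 0); as a_i^2 <= a_i we have D >= 4 > 0, so they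
   amount to 3 D <= A B.  Now A B - 3 D is the excess (2 a1 + x)(4 + S) - 3 (S - Q)
   plus 2 delta (1 + 2 delta + 2 a1 + x + S), and the excess is at least a1:
   dropping its nonnegative quadratic terms, this holds as soon as
   3 (a2 + a3 + a4 + a5) <= 4 (a1 + x), which covers x = N when
   a2 + a3 + a4 + a5 <= 1 and the first three cases of alpha; in the remaining
   cases a2 + a3 + a4 + a5 > 1 and x >= a2, and the squares in Q are needed.
   Hence A B - 3 D >= a1 + 2 delta, which is positive unless a1 = delta = 0. *)

Section CrossMultiplication.
Variable R : realFieldType.

Definition ratio_bound (delta S Q : R) : R :=
  2 / 3 * ((4 + 2 * delta + S) / (4 + 4 * delta + 2 * S - Q)).

Definition excess (a1 x S Q : R) : R := (2 * a1 + x) * (4 + S) - 3 * (S - Q).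

Lemma ratio_sub_two_div (A B D : R) : 0 < A -> 0 < D ->
  2 / 3 * (B / D) - 2 / A = (A * B - 3 * D) * (2 / (3 * A * D)).
Proof. by move=> A_gt0 D_gt0; field; rewrite !gt_eqF. Qed.

Lemma two_div_le_ratio (A B D : R) : 0 < A -> 0 < D ->
  (2 / A <= 2 / 3 * (B / D)) = (3 * D <= A * B).
Proof.
move=> A_gt0 D_gt0; rewrite -subr_ge0 ratio_sub_two_div // pmulr_lge0 ?subr_ge0 //.
by rewrite divr_gt0 // !mulr_gt0.
Qed.

Lemma two_div_lt_ratio (A B D : R) : 0 < A -> 0 < D ->
  (2 / A < 2 / 3 * (B / D)) = (3 * D < A * B).
Proof.
move=> A_gt0 D_gt0; rewrite -subr_gt0 ratio_sub_two_div // pmulr_lgt0 ?subr_gt0 //.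
by rewrite divr_gt0 // !mulr_gt0.
Qed.

Lemma cross_diff_excess (a1 delta x S Q : R) :
  (3 + 2 * a1 + 2 * delta + x) * (4 + 2 * delta + S)
    - 3 * (4 + 4 * delta + 2 * S - Q)
  = excess a1 x S Q + 2 * delta * (1 + 2 * delta + 2 * a1 + x + S).
Proof. by rewrite /excess; ring. Qed.

Lemma two_div_le_ratio_bound (a1 delta x S Q : R) :
  0 <= a1 -> 0 <= delta -> 0 <= x -> Q <= S -> 0 <= S ->
  a1 <= excess a1 x S Q ->
  2 / (3 + 2 * a1 + 2 * delta + x) <= ratio_bound delta S Q /\
  (0 < a1 + 2 * delta ->
     2 / (3 + 2 * a1 + 2 * delta + x) < ratio_bound delta S Q).
Proof.
move=> a1_ge0 delta_ge0 x_ge0 le_QS S_ge0 excess_ge.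
have A_gt0 : 0 < 3 + 2 * a1 + 2 * delta + x by lra.
have D_gt0 : 0 < 4 + 4 * delta + 2 * S - Q by lra.
have gap : a1 + 2 * delta <= (3 + 2 * a1 + 2 * delta + x) * (4 + 2 * delta + S)
                               - 3 * (4 + 4 * delta + 2 * S - Q).
  rewrite cross_diff_excess.
  have : 0 <= 2 * delta * (2 * delta + 2 * a1 + x + S) by rewrite !mulr_ge0 //; lra.
  lra.
by rewrite /ratio_bound two_div_le_ratio // two_div_lt_ratio //; split=> [|pos]; lra.
Qed.

Lemma sqr_le_self (a : R) : 0 <= a -> a <= 1 -> a ^+ 2 <= a.
Proof. by rewrite expr2; exact: ler_piMr. Qed.

Lemma excess_ge_linear (a1 x S Q : R) : 0 <= a1 -> 0 <= x -> 0 <= S -> 0 <= Q ->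
  3 * S <= 7 * a1 + 4 * x -> a1 <= excess a1 x S Q.
Proof.
move=> a1_ge0 x_ge0 S_ge0 Q_ge0 linear; rewrite /excess.
have : 0 <= (2 * a1 + x) * S by rewrite mulr_ge0 //; lra.
lra.
Qed.

Lemma excess_ge_large_tail (a1 a2 a3 a4 a5 x : R) :
  a1 <= 1 -> a2 <= a1 -> a3 <= a2 -> a4 <= a3 -> a5 <= a4 -> 0 <= a5 ->
  1 < a2 + a3 + a4 + a5 -> a2 <= x ->
  a1 <= excess a1 x (a1 + a2 + a3 + a4 + a5)
                    (a1 ^+ 2 + a2 ^+ 2 + a3 ^+ 2 + a4 ^+ 2 + a5 ^+ 2).
Proof. by rewrite /excess => *; nra. Qed.

End CrossMultiplication.

Lemma lhs1_le_rhs1 (a1 a2 a3 a4 a5 delta N : rat) :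
  a1 <= 1 -> a2 <= a1 -> a3 <= a2 -> a4 <= a3 -> a5 <= a4 -> 0 <= a5 ->
  0 <= delta -> a2 <= N ->
  (a2 + a3 + a4 + a5 <= 1 -> a2 + a3 + a4 + a5 <= N) ->
  lhs1 a1 delta N <= rhs1 a1 a2 a3 a4 a5 delta /\
  (0 < a1 + 2 * delta -> lhs1 a1 delta N < rhs1 a1 a2 a3 a4 a5 delta).
Proof.
move=> a1_le1 a21 a32 a43 a54 a5_ge0 delta_ge0 a2_le_N tail_le_N.
set S := a1 + a2 + a3 + a4 + a5.
set Q := a1 ^+ 2 + a2 ^+ 2 + a3 ^+ 2 + a4 ^+ 2 + a5 ^+ 2.
have -> : rhs1 a1 a2 a3 a4 a5 delta = ratio_bound delta S Q.
  by rewrite /rhs1 /ratio_bound; congr (_ * (_ / _)); rewrite /S /Q; ring.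
have Q_le_S : Q <= S by do !apply: lerD; apply: sqr_le_self; lra.
have Q_ge0 : 0 <= Q by do !apply: addr_ge0; apply: sqr_ge0.
have S_ge0 : 0 <= S by rewrite /S; lra.
apply: two_div_le_ratio_bound => //; [lra | lra |].
have [small|large] := lerP (a2 + a3 + a4 + a5) 1.
  by apply: excess_ge_linear => //; have := tail_le_N small; rewrite /S; lra.
exact: excess_ge_large_tail.
Qed.

Lemma alpha_le_rhs2 (a1 a2 a3 a4 delta : rat) :
  a1 <= 1 -> a2 <= a1 -> a3 <= a2 -> a4 <= a3 -> 0 <= a4 -> 0 <= delta ->
  alpha a1 a2 a3 a4 delta <= rhs2 a1 a2 a3 a4 delta /\
  (0 < a1 + 2 * delta -> alpha a1 a2 a3 a4 delta < rhs2 a1 a2 a3 a4 delta).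
Proof.
move=> a1_le1 a21 a32 a43 a4_ge0 delta_ge0.
set S := a1 + a2 + a3 + a4.
set Q := a1 ^+ 2 + a2 ^+ 2 + a3 ^+ 2 + a4 ^+ 2.
have -> : rhs2 a1 a2 a3 a4 delta = ratio_bound delta S Q.
  by rewrite /rhs2 /ratio_bound mulf_div; congr (_ / _); rewrite /S /Q; ring.
have Q_le_S : Q <= S by do !apply: lerD; apply: sqr_le_self; lra.
have Q_ge0 : 0 <= Q by do !apply: addr_ge0; apply: sqr_ge0.
have S_ge0 : 0 <= S by rewrite /S; lra.
have bound x : 0 <= x -> a1 <= excess a1 x S Q ->
    2 / (3 + 2 * a1 + 2 * delta + x) <= ratio_bound delta S Q /\
    (0 < a1 + 2 * delta -> 2 / (3 + 2 * a1 + 2 * delta + x) < ratio_bound delta S Q).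
  by move=> x_ge0; apply: two_div_le_ratio_bound => //; lra.
have linear x : 0 <= x -> 3 * S <= 7 * a1 + 4 * x -> a1 <= excess a1 x S Q.
  by move=> x_ge0; apply: excess_ge_linear => //; lra.
rewrite /alpha; case: ifP => [_|_].
  have := bound (a2 + a3 + a4); rewrite !addrA; apply; first lra.
  by apply: linear; rewrite /S; lra.
case: ifP => [_|_].
  have := bound (a2 + a4); rewrite !addrA; apply; first lra.
  by apply: linear; rewrite /S; lra.
case: ifP => [_|/negbT].
  have := bound (a3 + a4); rewrite !addrA; apply; first lra.
  by apply: linear; rewrite /S; lra.
rewrite -ltNge => large; apply: bound; first lra.
have := @excess_ge_large_tail _ a1 a2 a3 a4 0 a2.
by rewrite expr0n !addr0; apply; lra.
Qed.

Theorem propositionA1 (a1 a2 a3 a4 a5 delta N : rat) :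
  a1 <= 1 -> a2 <= a1 -> a3 <= a2 -> a4 <= a3 -> a5 <= a4 -> 0 <= a5 ->
  0 <= delta ->
  is_largest_le1 (candidates a2 a3 a4 a5) N ->
  (lhs1 a1 delta N <= rhs1 a1 a2 a3 a4 a5 delta /\
   alpha a1 a2 a3 a4 delta <= rhs2 a1 a2 a3 a4 delta) /\
  (~ (a1 = 0 /\ delta = 0) ->
     lhs1 a1 delta N < rhs1 a1 a2 a3 a4 a5 delta /\
     alpha a1 a2 a3 a4 delta < rhs2 a1 a2 a3 a4 delta).
Proof.
move=> a1_le1 a21 a32 a43 a54 a5_ge0 delta_ge0 [_ [_ N_max]].
have a2_le_N : a2 <= N by apply: N_max; [rewrite /candidates inE eqxx | lra].
have tail_le_N : a2 + a3 + a4 + a5 <= 1 -> a2 + a3 + a4 + a5 <= N.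
  by apply: N_max; rewrite /candidates !inE eqxx !orbT.
have a4_ge0 : 0 <= a4 by lra.
have pos : ~ (a1 = 0 /\ delta = 0) -> 0 < a1 + 2 * delta.
  move=> not_both_zero; rewrite ltNge; apply/negP => nonpos.
  by apply: not_both_zero; split; lra.
have [le1 lt1] := lhs1_le_rhs1 a1_le1 a21 a32 a43 a54 a5_ge0 delta_ge0 a2_le_N tail_le_N.
have [le2 lt2] := alpha_le_rhs2 a1_le1 a21 a32 a43 a4_ge0 delta_ge0.
split=> [|/pos a1_delta_gt0]; first exact: conj le1 le2.
exact: conj (lt1 a1_delta_gt0) (lt2 a1_delta_gt0).
Qed.
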